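(* Let $(M,\cdot)$ be a countable semigroup. The following two statements are equivalent. (i) (Hindman's theorem for $(M,\cdot)$.) For every IP set $X\subseteq M$ and every $Y\subseteq X$, either $Y$ or $X\setminus Y$ is an IP set. (ii) (Existence of idempotent types.) For every semigroup structure $\mathcal{M}$ based on $(M,\cdot)$ and every $\mathcal{M}$-definable set $X\subseteq M$ which is an IP set, there is an idempotent type $p(x)\in S_1(M)$ over $\mathcal{M}$ containing the formula defining $X$.
   Context: A semigroup structure is a first-order structure $\mathcal{M}=(M,\cdot,\ldots)$ in a countable language $L$ such that $(M,\cdot)$ is a semigroup; it is said to be based on $(M,\cdot)$. Definable means definable by an $L(M)$-formula, i.e. a formula with parameters from $M$. $S_n(M)$ denotes the space of complete $n$-types over $M$ (with respect to $\mathcal{M}$). A type $q(x,y)\in S_2(M)$ is independent if for every formula $\varphi(x,y)\in q$ there is $u\in M$ with $\varphi(u,y)\in q$. A type $p(x)\in S_1(M)$ is idempotent if there is an independent type $q(x,y)\in S_2(M)$ with $p(x)\cup p(y)\cup p(x\cdot y)\subseteq q(x,y)$ (here $p(y)$, $p(x\cdot y)$ denote the sets obtained by substituting $y$, resp. $x\cdot y$, for $x$ in the formulas of $p$). For a sequence $(u_n)_{n<\omega}$ in $M$, $\mathrm{FP}(u_n)=\{u_{i_1}\cdots u_{i_k}: k\ge 1,\ i_1<\cdots<i_k\}$. A set $X\subseteq M$ is an IP set if there is a sequence $(u_n)$ in $M$ with $\mathrm{FP}(u_n)\subseteq X$. *)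

From Stdlib Require Import List.
From mathcomp Require Import all_boot.
Set Implicit Arguments. Unset Strict Implicit. Unset Printing Implicit Defensive.

Section IP.
Variables (M : Type) (op : M -> M -> M).

Fixpoint lprod (a : M) (s : seq M) : M :=
  match s with [::] => a | b :: s' => op a (lprod b s') end.

(* x \in FP(u_n): x = u_{i1} ... u_{ik}, k >= 1, i1 < ... < ik *)
Definition FP (u : nat -> M) (x : M) : Prop :=
  exists (i : nat) (s : seq nat), sorted ltn (i :: s) /\ x = lprod (u i) (map u s).

Definition IPset (X : M -> Prop) : Prop :=
  exists u : nat -> M, forall x, FP u x -> X x.

Definition Hindman : Prop :=
  forall X Y : M -> Prop, IPset X -> (forall y, Y y -> X y) ->
    IPset Y \/ IPset (fun x => X x /\ ~ Y x).
End IP.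

Section Syntax.
Variables (M : Type) (F : Type) (arF : F -> nat) (R : Type) (arR : R -> nat).

Inductive term : Type :=
  | Var of nat
  | Par of M
  | Mul of term & term
  | App (f : F) of ('I_(arF f) -> term).

Inductive form : Type :=
  | Eq of term & term
  | Rel (r : R) of ('I_(arR r) -> term)
  | Neg of form
  | And of form & form
  | Ex of form.                               (* binds de Bruijn index 0 *)

Fixpoint tren (rho : nat -> nat) (t : term) : term :=
  match t with
  | Var i => Var (rho i)
  | Par a => Par a
  | Mul t1 t2 => Mul (tren rho t1) (tren rho t2)
  | App f a => App (fun i => tren rho (a i))
  end.

Fixpoint tsubst (sigma : nat -> term) (t : term) : term :=
  match t with
  | Var i => sigma i
  | Par a => Par a
  | Mul t1 t2 => Mul (tsubst sigma t1) (tsubst sigma t2)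
  | App f a => App (fun i => tsubst sigma (a i))
  end.

Definition up (sigma : nat -> term) : nat -> term :=
  fun i => match i with 0 => Var 0 | j.+1 => tren S (sigma j) end.

Fixpoint fsubst (sigma : nat -> term) (phi : form) : form :=
  match phi with
  | Eq t1 t2 => Eq (tsubst sigma t1) (tsubst sigma t2)
  | Rel r a => Rel (fun i => tsubst sigma (a i))
  | Neg phi => Neg (fsubst sigma phi)
  | And phi psi => And (fsubst sigma phi) (fsubst sigma psi)
  | Ex phi => Ex (fsubst (up sigma) phi)
  end.

Fixpoint twf (n : nat) (t : term) : Prop :=
  match t with
  | Var i => i < n
  | Par _ => True
  | Mul t1 t2 => twf n t1 /\ twf n t2
  | App f a => forall i, twf n (a i)
  end.

Fixpoint fwf (n : nat) (phi : form) : Prop :=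
  match phi with
  | Eq t1 t2 => twf n t1 /\ twf n t2
  | Rel r a => forall i, twf n (a i)
  | Neg phi => fwf n phi
  | And phi psi => fwf n phi /\ fwf n psi
  | Ex phi => fwf n.+1 phi
  end.

Variables (op : M -> M -> M) (iF : forall f : F, ('I_(arF f) -> M) -> M)
          (iR : forall r : R, ('I_(arR r) -> M) -> Prop).

Definition scons (a : M) (e : nat -> M) : nat -> M :=
  fun i => match i with 0 => a | j.+1 => e j end.

Fixpoint teval (e : nat -> M) (t : term) : M :=
  match t with
  | Var i => e i
  | Par a => a
  | Mul t1 t2 => op (teval e t1) (teval e t2)
  | App f a => iF (fun i => teval e (a i))
  end.

Fixpoint sat (e : nat -> M) (phi : form) : Prop :=
  match phi with
  | Eq t1 t2 => teval e t1 = teval e t2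
  | Rel r a => iR (fun i => teval e (a i))
  | Neg phi => ~ sat e phi
  | And phi psi => sat e phi /\ sat e psi
  | Ex phi => exists a, sat (scons a e) phi
  end.
End Syntax.

(* A countable language L = {·} ∪ (function symbols) ∪ (relation symbols),
   with "·" interpreted as op (the built-in Mul term constructor). *)
Record sgStructure (M : Type) (op : M -> M -> M) := SgStructure {
  sym_fun : countType;
  ar_fun : sym_fun -> nat;
  int_fun : forall f : sym_fun, ('I_(ar_fun f) -> M) -> M;
  sym_rel : countType;
  ar_rel : sym_rel -> nat;
  int_rel : forall r : sym_rel, ('I_(ar_rel r) -> M) -> Prop }.

Section Types.
Variables (M : Type) (op : M -> M -> M) (S : sgStructure op).

Definition formula := form M (@ar_fun M op S) (@ar_rel M op S).
Definition satS (e : nat -> M) (phi : formula) : Prop :=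
  sat op (@int_fun M op S) (@int_rel M op S) e phi.

(* complete n-type over M (variables x_0..x_{n-1}): a set of L(M)-formulas in
   these variables, consistent with Th(M_M) (= finitely satisfiable in M) and
   complete. *)
Definition is_ctype (n : nat) (p : formula -> Prop) : Prop :=
  [/\ (forall phi, p phi -> fwf n phi),
      (forall phi, fwf n phi -> p phi \/ p (Neg phi)) &
      (forall s : seq formula, (forall phi, List.In phi s -> p phi) ->
         exists e : nat -> M, forall phi, List.In phi s -> satS e phi)].

(* variables: x = index 0, y = index 1 *)
Definition sub_y : nat -> term M (@ar_fun M op S) :=
  fun i => match i with 0 => Var _ _ 1 | _ => Var _ _ i end.
Definition sub_xy : nat -> term M (@ar_fun M op S) :=
  fun i => match i with 0 => Mul (Var _ _ 0) (Var _ _ 1) | _ => Var _ _ i end.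
Definition sub_x_par (u : M) : nat -> term M (@ar_fun M op S) :=
  fun i => match i with 0 => Par _ u | _ => Var _ _ i end.

Definition independent (q : formula -> Prop) : Prop :=
  forall phi, q phi -> exists u : M, q (fsubst (sub_x_par u) phi).

Definition idempotent_type (p : formula -> Prop) : Prop :=
  is_ctype 1 p /\
  exists q, [/\ is_ctype 2 q, independent q &
    forall phi, p phi -> [/\ q phi, q (fsubst sub_y phi) & q (fsubst sub_xy phi)]].
End Types.

(* (ii) => (i): given an IP set X and Y inside it, expand (M, op) by predicates for X and
   Y and take an idempotent type p containing X; it decides Y, and every formula of an
   idempotent type defines an IP set: independence of the witnessing q(x, y) yields
   u with psi(u) and psi(y) /\ psi(u y) in p, and iterating builds the sequence.

   (i) => (ii): enumerate the countably many formulas and apply Hindman's theorem once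
   per formula to get sequences chain 0, chain 1, ... with FP(chain (n+1)) inside the
   tail of FP(chain n) and homogeneous for the n-th formula; the formulas holding on
   some FP(chain n) form a complete type p containing the given IP formula. Its points
   c_k = chain k 0 satisfy c_k * FP(chain (k+1)) inside FP(chain k), so the limit of
   tp(c_k, p-generic y) along a diagonally thinned subsequence of k is an independent
   2-type q witnessing that p is idempotent. *)

From Stdlib Require Import List Classical ClassicalEpsilon FunctionalExtensionality.
From mathcomp Require Import all_boot.
Set Implicit Arguments. Unset Strict Implicit. Unset Printing Implicit Defensive.

Section Semantics.
Variables (M F R : Type) (arF : F -> nat) (arR : R -> nat).
Variables (op : M -> M -> M) (iF : forall f : F, ('I_(arF f) -> M) -> M)
          (iR : forall r : R, ('I_(arR r) -> M) -> Prop).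

Local Notation term := (term M arF).
Local Notation form := (form M arF arR).
Local Notation teval := (teval op iF).
Local Notation sat := (sat op iF iR).

Lemma teval_tren e rho (t : term) :
  teval e (tren rho t) = teval (fun i => e (rho i)) t.
Proof.
elim: t => //= [t1 IH1 t2 IH2|f a IH]; first by rewrite IH1 IH2.
by congr (iF _); apply: functional_extensionality => i; apply: IH.
Qed.

Lemma teval_tsubst e sigma (t : term) :
  teval e (tsubst sigma t) = teval (fun i => teval e (sigma i)) t.
Proof.
elim: t => //= [t1 IH1 t2 IH2|f a IH]; first by rewrite IH1 IH2.
by congr (iF _); apply: functional_extensionality => i; apply: IH.
Qed.

Lemma sat_fsubst (phi : form) e sigma :
  sat e (fsubst sigma phi) <-> sat (fun i => teval e (sigma i)) phi.
Proof.
elim: phi e sigma => [t1 t2|r a|phi IH|phi IH psi IH'|phi IH] e sigma /=.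
- by rewrite !teval_tsubst.
- suff -> : (fun i => teval e (tsubst sigma (a i))) =
            (fun i => teval (fun j => teval e (sigma j)) (a i)) by [].
  by apply: functional_extensionality => i; rewrite teval_tsubst.
- by rewrite IH.
- by rewrite IH IH'.
- have env_up x : (fun i => teval (scons x e) (up sigma i)) =
                  scons x (fun i => teval e (sigma i)).
    by apply: functional_extensionality => -[|i] //=; rewrite teval_tren.
  by split=> -[x Hx]; exists x; [move/IH: Hx; rewrite env_up | apply/IH; rewrite env_up].
Qed.

Lemma eq_teval_wf n (t : term) e e' :
  twf n t -> (forall i, i < n -> e i = e' i) -> teval e t = teval e' t.
Proof.
elim: t => //= [i|t1 IH1 t2 IH2|f a IH] wf_t eq_e; first exact: eq_e.
  by case: wf_t => wf1 wf2; rewrite (IH1 wf1 eq_e) (IH2 wf2 eq_e).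
by congr (iF _); apply: functional_extensionality => i; apply: IH.
Qed.

Lemma eq_sat_wf n (phi : form) e e' :
  fwf n phi -> (forall i, i < n -> e i = e' i) -> (sat e phi <-> sat e' phi).
Proof.
elim: phi n e e' => [t1 t2|r a|phi IH|phi IH psi IH'|phi IH] n e e' /= wf_phi eq_e.
- by case: wf_phi => wf1 wf2; rewrite (eq_teval_wf wf1 eq_e) (eq_teval_wf wf2 eq_e).
- suff -> : (fun i => teval e (a i)) = (fun i => teval e' (a i)) by [].
  by apply: functional_extensionality => i; apply: eq_teval_wf (wf_phi i) eq_e.
- by rewrite (IH n e e').
- by case: wf_phi => wf1 wf2; rewrite (IH n e e') // (IH' n e e').
- have eq_scons x : sat (scons x e) phi <-> sat (scons x e') phi.
    by apply: (IH n.+1) => // -[|i] //= /eq_e.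
  by split=> -[x Hx]; exists x; apply/eq_scons.
Qed.

Lemma twf_tren n m rho (t : term) :
  twf n t -> (forall i, i < n -> rho i < m) -> twf m (tren rho t).
Proof.
elim: t => //= [i|t1 IH1 t2 IH2|f a IH] wf_t wf_rho; first exact: wf_rho.
  by case: wf_t => wf1 wf2; split; [apply: IH1|apply: IH2].
by move=> i; apply: IH.
Qed.

Lemma twf_tsubst n m sigma (t : term) :
  twf n t -> (forall i, i < n -> twf m (sigma i)) -> twf m (tsubst sigma t).
Proof.
elim: t => //= [i|t1 IH1 t2 IH2|f a IH] wf_t wf_sigma; first exact: wf_sigma.
  by case: wf_t => wf1 wf2; split; [apply: IH1|apply: IH2].
by move=> i; apply: IH.
Qed.

Lemma fwf_fsubst n m sigma (phi : form) :
  fwf n phi -> (forall i, i < n -> twf m (sigma i)) -> fwf m (fsubst sigma phi).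
Proof.
elim: phi n m sigma => [t1 t2|r a|phi IH|phi IH psi IH'|phi IH] n m sigma /= wf_phi wf_sigma.
- by case: wf_phi => wf1 wf2; split; apply: twf_tsubst wf_sigma.
- by move=> i; apply: twf_tsubst (wf_phi i) wf_sigma.
- exact: IH wf_phi wf_sigma.
- by case: wf_phi => wf1 wf2; split; [apply: IH wf1 wf_sigma|apply: IH' wf2 wf_sigma].
- by apply: (IH n.+1) wf_phi _ => -[|i] //= /wf_sigma /twf_tren; apply.
Qed.

Lemma twf_widen n m (t : term) : n <= m -> twf n t -> twf m t.
Proof.
move=> le_nm; elim: t => //= [i|t1 IH1 t2 IH2|f a IH].
- by move/leq_trans; apply.
- by case=> wf1 wf2; split; [apply: IH1|apply: IH2].
- by move=> wf_a i; apply: IH.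
Qed.

Lemma fwf_widen n m (phi : form) : n <= m -> fwf n phi -> fwf m phi.
Proof.
elim: phi n m => [t1 t2|r a|phi IH|phi IH psi IH'|phi IH] n m le_nm /=.
- by case=> wf1 wf2; split; apply: twf_widen le_nm _.
- by move=> wf_a i; apply: twf_widen le_nm _.
- exact: IH.
- by case=> wf1 wf2; split; [apply: IH le_nm wf1|apply: IH' le_nm wf2].
- exact: IH.
Qed.

End Semantics.

Section Countable.
Variables (M F R : countType) (arF : F -> nat) (arR : R -> nat).

Let pickle_inj (T : countType) : injective (@pickle T) := pcan_inj pickleK.

Fixpoint term_tree (t : term M arF) : GenTree.tree nat :=
  match t with
  | Var i => GenTree.Node 0 [:: GenTree.Leaf i]
  | Par a => GenTree.Node 1 [:: GenTree.Leaf (pickle a)]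
  | Mul t1 t2 => GenTree.Node 2 [:: term_tree t1; term_tree t2]
  | App f a => GenTree.Node 3 (GenTree.Leaf (pickle f) ::
                 [seq term_tree (a i) | i <- enum 'I_(arF f)])
  end.

Lemma term_tree_inj : injective term_tree.
Proof.
elim=> [i|x|t1 IH1 t2 IH2|f a IH] [j|y|u1 u2|g b] //=.
- by case=> ->.
- by case=> /pickle_inj ->.
- by case=> /IH1 -> /IH2 ->.
- case=> /pickle_inj eq_fg; subst g => /eq_in_map eq_ab.
  congr App; apply: functional_extensionality => i.
  by apply: IH; apply: eq_ab; rewrite mem_enum.
Qed.

Fixpoint form_tree (phi : form M arF arR) : GenTree.tree nat :=
  match phi with
  | Eq t1 t2 => GenTree.Node 0 [:: term_tree t1; term_tree t2]
  | Rel r a => GenTree.Node 1 (GenTree.Leaf (pickle r) ::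
                 [seq term_tree (a i) | i <- enum 'I_(arR r)])
  | Neg phi => GenTree.Node 2 [:: form_tree phi]
  | And phi psi => GenTree.Node 3 [:: form_tree phi; form_tree psi]
  | Ex phi => GenTree.Node 4 [:: form_tree phi]
  end.

Lemma form_tree_inj : injective form_tree.
Proof.
elim=> [t1 t2|r a|phi IH|phi IH psi IH'|phi IH] [u1 u2|s b|chi|chi1 chi2|chi] //=.
- by case=> /term_tree_inj -> /term_tree_inj ->.
- case=> /pickle_inj eq_rs; subst s => /eq_in_map eq_ab.
  congr Rel; apply: functional_extensionality => i.
  by apply: term_tree_inj; apply: eq_ab; rewrite mem_enum.
- by case=> /IH ->.
- by case=> /IH -> /IH' ->.
- by case=> /IH ->.
Qed.

Definition form_code (phi : form M arF arR) : nat := pickle (form_tree phi).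

Lemma form_code_inj : injective form_code.
Proof. by move=> phi psi /pickle_inj /form_tree_inj. Qed.

End Countable.

Section FiniteProducts.
Variables (M : Type) (op : M -> M -> M).

Lemma path_ltn_succ i (s : seq nat) : path ltn i s -> path ltn i.+1 (map S s).
Proof. by elim: s i => //= j s IH i /andP[lt_ij /IH ->]; rewrite ltnS lt_ij. Qed.

Lemma FP_head (v : nat -> M) : FP op v (v 0).
Proof. by exists 0, [::]. Qed.

Lemma FP_behead (v : nat -> M) x : FP op (fun n => v n.+1) x -> FP op v x.
Proof.
case=> i [s [sorted_s ->]]; exists i.+1, (map S s).
by rewrite -map_comp; split; first exact: path_ltn_succ.
Qed.

Lemma FP_cons (v : nat -> M) x :
  FP op (fun n => v n.+1) x -> FP op v (op (v 0) x).
Proof.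
case=> i [s [sorted_s ->]]; exists 0, (i.+1 :: map S s).
by rewrite /= -map_comp path_ltn_succ.
Qed.

Lemma IPset_sub (X Y : M -> Prop) :
  (forall x, X x -> Y x) -> IPset op X -> IPset op Y.
Proof. by move=> sub_XY [u FP_X]; exists u => x /FP_X /sub_XY. Qed.

End FiniteProducts.

Lemma In_common_bound (A : Type) (P : nat -> A -> Prop) (s : seq A) :
  (forall n m x, n <= m -> P n x -> P m x) ->
  (forall x, List.In x s -> exists n, P n x) ->
  exists N, forall x, List.In x s -> P N x.
Proof.
move=> P_mono; elim: s => [|a s IH] P_s; first by exists 0.
have [n Pa] := P_s a (or_introl erefl).
have [N Ps] := IH (fun x sx => P_s x (or_intror sx)).
exists (maxn n N) => x /= [<-|sx]; first exact: P_mono (leq_maxl _ _) Pa.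
exact: P_mono (leq_maxr _ _) (Ps x sx).
Qed.

Section CompleteTypes.
Variables (M : Type) (op : M -> M -> M) (S : sgStructure op).

Local Notation sat1 phi a := (@satS M op S (fun _ : nat => a) phi).
Local Notation tev := (teval op (@int_fun M op S)).

Lemma ctype_sat n (q : formula S -> Prop) phi :
  is_ctype n q -> q phi -> exists e, satS e phi.
Proof.
case=> _ _ fin_sat q_phi.
have [e sat_e] : exists e, forall x, List.In x [:: phi] -> satS e x.
  by apply: fin_sat => x [<-|[]].
by exists e; apply: sat_e; left.
Qed.

Lemma ctype_and n (q : formula S -> Prop) phi psi :
  is_ctype n q -> q phi -> q psi -> q (And phi psi).
Proof.
case=> q_wf q_compl fin_sat q_phi q_psi.
have [//|q_neg] := q_compl (And phi psi) (conj (q_wf _ q_phi) (q_wf _ q_psi)).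
have [e sat_e] : exists e, forall x,
    List.In x [:: phi; psi; Neg (And phi psi)] -> satS e x.
  by apply: fin_sat => x [<-|[<-|[<-|[]]]].
case: (sat_e (Neg (And phi psi))); first by right; right; left.
by split; apply: sat_e; [left|right; left].
Qed.

Lemma ctype_sat2 n (q : formula S -> Prop) phi psi :
  is_ctype n q -> q phi -> q psi -> exists e, satS e phi /\ satS e psi.
Proof.
by move=> q_ctype q_phi q_psi; have [e []] := ctype_sat q_ctype (ctype_and q_ctype q_phi q_psi);
  exists e.
Qed.

Lemma sat1_wf (psi : formula S) e : fwf 1 psi -> satS e psi <-> sat1 psi (e 0).
Proof. by move=> wf_psi; apply: eq_sat_wf wf_psi _ => -[|i]. Qed.

Lemma sat1_fsubst (psi : formula S) sigma e : fwf 1 psi ->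
  satS e (fsubst sigma psi) <-> sat1 psi (tev e (sigma 0)).
Proof. by move=> wf_psi; rewrite /satS sat_fsubst; apply: (sat1_wf _ wf_psi). Qed.

End CompleteTypes.

Section IdempotentTypesAreIP.
Variables (M : Type) (op : M -> M -> M) (S : sgStructure op) (p q : formula S -> Prop).
Hypotheses (p_ctype : is_ctype 1 p) (q_ctype : is_ctype 2 q) (q_indep : independent q).
Hypothesis p_sub_q : forall phi, p phi ->
  [/\ q phi, q (fsubst (sub_y S) phi) & q (fsubst (sub_xy S) phi)].

Local Notation sat1 phi a := (@satS M op S (fun _ : nat => a) phi).

Lemma idempotent_type_step psi : p psi -> exists (u : M) (psi' : formula S),
  [/\ p psi', sat1 psi u & forall b, sat1 psi' b -> sat1 psi b /\ sat1 psi (op u b)].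
Proof.
move=> p_psi; have wf_psi : fwf 1 psi by case: p_ctype => wf _ _; apply: wf.
have [q_x q_y q_xy] := p_sub_q p_psi.
pose theta := And psi (And (fsubst (sub_y S) psi) (fsubst (sub_xy S) psi)).
have [u q_theta_u] := q_indep (ctype_and q_ctype q_x (ctype_and q_ctype q_y q_xy)).
have sat_theta_u e : satS e (fsubst (sub_x_par S u) theta) ->
    [/\ sat1 psi u, sat1 psi (e 1) & sat1 psi (op u (e 1))].
  rewrite /satS sat_fsubst /= => -[/(sat1_wf _ wf_psi) ? []].
  by move=> /(sat1_fsubst _ _ wf_psi) ? /(sat1_fsubst _ _ wf_psi).
pose tau i := if i is 0 then Mul (Par _ u) (Var _ _ 0) else Var M (@ar_fun M op S) i.
pose psi' := And psi (fsubst tau psi).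
have wf_psi' : fwf 1 psi' by split; last by apply: fwf_fsubst wf_psi _ => -[|i].
have sat_psi' b : sat1 psi' b <-> sat1 psi b /\ sat1 psi (op u b).
  by have := sat1_fsubst tau (fun _ => b) wf_psi; rewrite /satS /= => ->.
exists u, psi'; split; last by move=> b /sat_psi'.
- case: p_ctype => _ p_compl _; have [//|p_neg] := p_compl _ wf_psi'.
  have [_ q_neg_y _] := p_sub_q p_neg.
  have [e [sat_neg /sat_theta_u [_ psi_y psi_uy]]] := ctype_sat2 q_ctype q_neg_y q_theta_u.
  move: sat_neg; rewrite /satS sat_fsubst /= => sat_neg; exfalso; apply: sat_neg.
  exact/(sat1_wf _ wf_psi')/sat_psi'.
- by have [e /sat_theta_u []] := ctype_sat q_ctype q_theta_u.
Qed.

Lemma idempotent_type_IP chi : p chi -> IPset op (fun a => sat1 chi a).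
Proof.
move=> p_chi; pose T := {psi | p psi}.
have step (t : T) : exists ut : M * T, sat1 (sval t) ut.1 /\
    forall b, sat1 (sval ut.2) b -> sat1 (sval t) b /\ sat1 (sval t) (op ut.1 b).
  case: t => psi p_psi; have [u [psi' [p_psi' ? ?]]] := idempotent_type_step p_psi.
  by exists (u, exist _ psi' p_psi').
pose next t := sval (constructive_indefinite_description _ (step t)).
have next_spec t := svalP (constructive_indefinite_description _ (step t)).
pose fix stage n := if n is n'.+1 then (next (stage n')).2 else exist _ chi p_chi.
pose u n := (next (stage n)).1.
pose A n b := sat1 (sval (stage n)) b.
have A_u n : A n (u n) by case: (next_spec (stage n)).
have A_succ n b : A n.+1 b -> A n b /\ A n (op (u n) b).
  by case: (next_spec (stage n)) => _; apply.
have A_mono n m b : n <= m -> A m b -> A n b.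
  move/subnK <-; elim: (m - n) => //= k IH /A_succ [+ _]; exact: IH.
have A_FP s i : sorted ltn (i :: s) -> A i (lprod op (u i) (map u s)).
  elim: s i => [|j s IH] i /=; first by move=> _; apply: A_u.
  case/andP=> lt_ij sorted_s.
  by case: (A_succ i (lprod op (u j) (map u s))) => //; apply: A_mono lt_ij (IH _ sorted_s).
by exists u => x [i [s [sorted_s ->]]]; apply: A_mono (leq0n i) (A_FP s i sorted_s).
Qed.

End IdempotentTypesAreIP.

Lemma idempotent_types_Hindman (M : Type) (op : M -> M -> M) :
  (forall (S : sgStructure op) (phi : formula S), fwf 1 phi ->
     IPset op (fun a : M => @satS M op S (fun _ => a) phi) ->
     exists p : formula S -> Prop, idempotent_type p /\ p phi) ->
  Hindman op.
Proof.
move=> idem X Y IP_X sub_YX.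
pose S := @SgStructure M op void (fun _ => 0) (fun f => match f with end)
            bool (fun _ => 1) (fun r a => if r then X (a ord0) else Y (a ord0)).
pose in_X : formula S := @Rel _ _ _ _ _ true (fun _ => Var _ _ 0).
pose in_Y : formula S := @Rel _ _ _ _ _ false (fun _ => Var _ _ 0).
have [p [[p_ctype [q [q_ctype q_indep p_sub_q]]] p_X]] := idem S in_X (fun _ => isT) IP_X.
have IP_p := idempotent_type_IP p_ctype q_ctype q_indep p_sub_q.
case: (p_ctype) => _ p_compl _; case: (p_compl in_Y (fun _ => isT)) => p_Y; [left|right].
- by apply: IPset_sub (IP_p _ (ctype_and p_ctype p_X p_Y)) => x [].
- by apply: IPset_sub (IP_p _ (ctype_and p_ctype p_X p_Y)) => x [].
Qed.

Section Thinning.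
Variable Q : nat -> nat -> Prop.

Definition unbounded (J : nat -> Prop) := forall m, exists2 k, m <= k & J k.

(* [thin j.+1] keeps those [k] of [thin j] on which [Q j] takes the answer it takes
   infinitely often there, preferring "true". *)
Fixpoint thin j : nat -> Prop :=
  if j is j'.+1 then fun k => thin j' k /\
    (unbounded (fun k => thin j' k /\ Q j' k) /\ Q j' k \/
     ~ unbounded (fun k => thin j' k /\ Q j' k) /\ ~ Q j' k)
  else fun _ => True.

Lemma thin_unbounded j : unbounded (thin j).
Proof.
elim: j => [|j IH] m; first by exists m.
have [unb_Q|bnd_Q] := classic (unbounded (fun k => thin j k /\ Q j k)).
  by have [k le_mk [thin_k Q_k]] := unb_Q m; exists k => //=; split; last left.
have [m0 not_Q] : exists m0, forall k, m0 <= k -> thin j k -> ~ Q j k.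
  apply: NNPP => no_m0; apply: bnd_Q => m'; apply: NNPP => no_k; apply: no_m0.
  by exists m' => k le_k thin_k Q_k; apply: no_k; exists k.
have [k le_k thin_k] := IH (maxn m m0); rewrite geq_max in le_k.
case/andP: le_k => le_mk le_m0k.
by exists k => //=; split; last by right; split; last by apply: not_Q.
Qed.

Lemma thin_mono j j' k : j <= j' -> thin j' k -> thin j k.
Proof. by move/subnK <-; elim: (j' - j) => // n IH [/IH]. Qed.

Lemma thin_decides j :
  (forall k, thin j.+1 k -> Q j k) \/ (forall k, thin j.+1 k -> ~ Q j k).
Proof.
by case: (classic (unbounded (fun k => thin j k /\ Q j k))) => unb; [left|right];
  move=> k [_ [[]|[]]].
Qed.

End Thinning.

Section HindmanGivesIdempotentTypes.
Variables (M : countType) (op : M -> M -> M) (S : sgStructure op).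
Hypothesis hindman : Hindman op.
Variable u0 : nat -> M.

Local Notation sat1 phi a := (@satS M op S (fun _ : nat => a) phi).
Local Notation FP := (FP op).

Lemma Hindman_refine (v : nat -> M) (P : M -> Prop) : exists v' : nat -> M,
  (forall x, FP v' x -> FP (fun n => v n.+1) x) /\
  ((forall x, FP v' x -> P x) \/ (forall x, FP v' x -> ~ P x)).
Proof.
pose w n := v n.+1; have IP_w : IPset op (FP w) by exists w.
have [[v' IP_P]|[v' IP_notP]] :=
  @hindman (FP w) (fun x => FP w x /\ P x) IP_w (fun x => @proj1 _ _).
- by exists v'; split; [move=> x /IP_P []|left => x /IP_P []].
- exists v'; split=> [x /IP_notP []//|]; right=> x /IP_notP [FP_x not_P] P_x.
  exact: not_P (conj FP_x P_x).
Qed.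

Definition refine v P := sval (constructive_indefinite_description _ (Hindman_refine v P)).

Lemma refineP v P :
  (forall x, FP (refine v P) x -> FP (fun n => v n.+1) x) /\
  ((forall x, FP (refine v P) x -> P x) \/ (forall x, FP (refine v P) x -> ~ P x)).
Proof. exact: svalP (constructive_indefinite_description _ (Hindman_refine v P)). Qed.

Definition sat_coded n (b : M) := forall chi : formula S, form_code chi = n -> sat1 chi b.

Fixpoint chain n : nat -> M :=
  if n is n'.+1 then refine (chain n') (sat_coded n') else u0.

Lemma chain_decides n : (forall x, FP (chain n.+1) x -> sat_coded n x) \/
                         (forall x, FP (chain n.+1) x -> ~ sat_coded n x).
Proof. exact: (proj2 (refineP _ _)). Qed.

Lemma FP_chain_succ n x : FP (chain n.+1) x -> FP (fun k => chain n k.+1) x.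
Proof. exact: (proj1 (refineP _ _)). Qed.

Lemma FP_chain_mono n m x : n <= m -> FP (chain m) x -> FP (chain n) x.
Proof.
move/subnK <-; elim: (m - n) => // k IH.
by rewrite addSn => FP_x; apply/IH/FP_behead/FP_chain_succ.
Qed.

Definition eventually (P : M -> Prop) := exists n, forall b, FP (chain n) b -> P b.

Lemma eventually_seq (A : Type) (P : A -> M -> Prop) (s : seq A) :
  (forall x, List.In x s -> eventually (P x)) ->
  exists N, forall x, List.In x s -> forall b, FP (chain N) b -> P x b.
Proof.
apply: In_common_bound => n m x le_nm P_n b FP_b.
exact: P_n b (FP_chain_mono le_nm FP_b).
Qed.

Lemma eventually_decides (chi : formula S) :
  eventually (fun b => sat1 chi b) \/ eventually (fun b => ~ sat1 chi b).
Proof.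
case: (chain_decides (form_code chi)) => [all_sat|no_sat]; [left|right];
  exists (form_code chi).+1 => b FP_b; first exact: all_sat b FP_b chi erefl.
by move=> sat_b; apply: (no_sat b FP_b) => chi' /form_code_inj ->.
Qed.

Definition ptype (chi : formula S) := fwf 1 chi /\ eventually (fun b => sat1 chi b).

Lemma ptype_ctype : is_ctype 1 ptype.
Proof.
split=> [chi []//|chi wf_chi|s p_s].
  by case: (eventually_decides chi) => ev; [left|right].
have [N ev_N] := eventually_seq (fun x Hx => proj2 (p_s x Hx)).
by exists (fun _ => chain N 0) => x Hx; apply: ev_N Hx _ (FP_head _ _).
Qed.

Definition point k := chain k 0.

Definition p_at (a : M) (chi : formula S) :=
  eventually (fun b => satS (scons a (fun _ => b)) chi).

Lemma p_at_decides a (chi : formula S) : fwf 2 chi -> p_at a chi \/ p_at a (Neg chi).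
Proof.
move=> wf_chi.
pose sigma i := if i is j.+1 then Var M (@ar_fun M op S) j else Par _ a.
have sat_sigma b : sat1 (fsubst sigma chi) b <-> satS (scons a (fun _ => b)) chi.
  rewrite /satS sat_fsubst; apply: eq_sat_wf wf_chi _ => -[|i] //.
by case: (eventually_decides (fsubst sigma chi)) => -[n ev_n]; [left|right];
  exists n => b /ev_n; rewrite sat_sigma.
Qed.

Definition p_at_coded j k :=
  forall chi : formula S, form_code chi = j -> fwf 2 chi -> p_at (point k) chi.

Local Notation thinned := (thin p_at_coded).

Definition qtype (chi : formula S) :=
  fwf 2 chi /\ exists n, forall k, n <= k -> thinned n k -> p_at (point k) chi.

Lemma qtype_complete (chi : formula S) : fwf 2 chi -> qtype chi \/ qtype (Neg chi).
Proof.
move=> wf_chi; case: (thin_decides p_at_coded (form_code chi)) => thin_j; [left|right];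
  split=> //; exists (form_code chi).+1 => k _ /thin_j; first by apply.
case: (p_at_decides (point k) wf_chi) => // p_chi not_coded; exfalso; apply: not_coded.
by move=> chi' /form_code_inj ->.
Qed.

Lemma qtype_ctype : is_ctype 2 qtype.
Proof.
split=> [chi []//|chi /qtype_complete //|s q_s].
have [N q_N] := In_common_bound
  (P := fun n chi => forall k, n <= k -> thinned n k -> p_at (point k) chi)
  (fun n m x le_nm q_n k le_mk thin_k => q_n k (leq_trans le_nm le_mk) (thin_mono le_nm thin_k))
  (fun x Hx => proj2 (q_s x Hx)).
have [k le_Nk thin_k] := thin_unbounded p_at_coded N N.
have [N' ev_N'] := eventually_seq (fun x Hx => q_N x Hx k le_Nk thin_k).
by exists (scons (point k) (fun _ => chain N' 0)) => x Hx; apply: ev_N' Hx _ (FP_head _ _).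
Qed.

Lemma qtype_independent : independent qtype.
Proof.
move=> chi [wf_chi [n q_n]]; have [k le_nk thin_k] := thin_unbounded p_at_coded n n.
have [N ev_N] := q_n k le_nk thin_k.
exists (point k); split; first by apply: fwf_fsubst wf_chi _ => -[|[|i]].
exists 0 => k' _ _; exists N => b /ev_N; rewrite /satS sat_fsubst.
by apply: (iffLR (eq_sat_wf _ _ _ wf_chi _)) => -[|[|i]].
Qed.

Lemma ptype_sub_qtype psi : ptype psi ->
  [/\ qtype psi, qtype (fsubst (sub_y S) psi) & qtype (fsubst (sub_xy S) psi)].
Proof.
move=> [wf_psi [n ev_n]]; split; split.
- exact: fwf_widen wf_psi.
- exists n => k le_nk _; exists 0 => b _; apply/sat1_wf => //.
  exact: ev_n _ (FP_chain_mono le_nk (FP_head _ _)).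
- by apply: fwf_fsubst wf_psi _ => -[|i].
- by exists 0 => k _ _; exists n => b /ev_n sat_b; apply/sat1_fsubst.
- by apply: fwf_fsubst wf_psi _ => -[|i].
- exists n => k le_nk _; exists k.+1 => b FP_b; apply/sat1_fsubst => //.
  exact/ev_n/(FP_chain_mono le_nk)/FP_cons/FP_chain_succ.
Qed.

Lemma ptype_idempotent : idempotent_type ptype.
Proof.
split; first exact: ptype_ctype.
by exists qtype; split; [exact: qtype_ctype|exact: qtype_independent|exact: ptype_sub_qtype].
Qed.

End HindmanGivesIdempotentTypes.

Theorem mainTheorem1 (M : countType) (op : M -> M -> M)
  (assoc : forall a b c : M, op a (op b c) = op (op a b) c) :
  Hindman op <->
  (forall (S : sgStructure op) (phi : formula S),
     fwf 1 phi ->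
     IPset op (fun a : M => @satS M op S (fun _ => a) phi) ->
     exists p : formula S -> Prop, idempotent_type p /\ p phi).
Proof.
(* [lprod] brackets products to the right. *)
split; last exact: idempotent_types_Hindman.
move=> hindman S phi wf_phi [u0 IP_phi].
by exists (@ptype M op S hindman u0); split; [exact: ptype_idempotent|split; last by exists 0].
Qed.
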